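(* Let $n\ge 1$ and let the braid group $B_{n+1}$, with standard generators $\sigma_1,\dotsc,\sigma_n$, act on $(\mathbb{C}/\pi\mathbb{Z})^{n+1}$ by \[ \sigma_i:\ \phi_i\mapsto 2\phi_i-\phi_{i+1},\qquad \phi_{i+1}\mapsto\phi_i,\qquad \phi_j\mapsto\phi_j\ (j\ne i,i+1). \] Then the orbit of a point $(\phi_1,\dotsc,\phi_{n+1})\in(\mathbb{C}/\pi\mathbb{Z})^{n+1}$ under this action is finite if and only if $\phi_i-\phi_{i+1}\in\pi\mathbb{Q}$ (modulo $\pi\mathbb{Z}$) for every $i=1,\dotsc,n$.
   Context: The formulas have integer coefficients, so they are well defined on $(\mathbb{C}/\pi\mathbb{Z})^{n+1}$; the condition $\phi_i-\phi_{i+1}\in\pi\mathbb{Q}$ means that some (equivalently every) representative of $\phi_i-\phi_{i+1}\in\mathbb{C}/\pi\mathbb{Z}$ lies in $\pi\mathbb{Q}$. *)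

From HB Require Import structures.
From mathcomp Require Import all_boot all_order all_algebra.
From mathcomp Require Import complex.
From mathcomp Require Import reals trigo.
Set Implicit Arguments. Unset Strict Implicit. Unset Printing Implicit Defensive.
Import Order.TTheory GRing.Theory Num.Theory.
Local Open Scope ring_scope.
Local Open Scope complex_scope.

(* A point of C^(n+1), indices 0..n (paper's phi_1..phi_{n+1} shifted by one). *)
Definition pt (R : realType) (n : nat) := 'I_n.+1 -> R[i].

Definition eqmodpi (R : realType) (n : nat) (phi psi : pt R n) : Prop :=
  forall j : 'I_n.+1, exists z : int, phi j - psi j = (pi : R)%:C * z%:~R.

(* The generator sigma_{i+1} (i : 'I_n, 0-based):
   phi_i |-> 2 phi_i - phi_{i+1},  phi_{i+1} |-> phi_i, others fixed. *)
Definition sigma (R : realType) (n : nat) (i : 'I_n) (phi : pt R n) : pt R n :=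
  fun j => if val j == val i then 2 * phi (inord i) - phi (inord i.+1)
           else if val j == i.+1 then phi (inord i)
           else phi j.

Definition sigma_inv (R : realType) (n : nat) (i : 'I_n) (phi : pt R n) : pt R n :=
  fun j => if val j == val i then phi (inord i.+1)
           else if val j == i.+1 then 2 * phi (inord i.+1) - phi (inord i)
           else phi j.

(* psi lies in the braid-group orbit of (the class of) phi: psi is obtained
   from phi by a finite word in the generators sigma_i and their inverses,
   up to equality mod pi Z. *)
Inductive braid_reach (R : realType) (n : nat) (phi : pt R n) : pt R n -> Prop :=
  | br_refl : braid_reach phi phi
  | br_sigma : forall (i : 'I_n) psi, braid_reach phi psi -> braid_reach phi (sigma i psi)
  | br_sigma_inv : forall (i : 'I_n) psi, braid_reach phi psi -> braid_reach phi (sigma_inv i psi).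

(* The orbit of the class of phi in (C/pi Z)^(n+1) is finite: it is covered by
   the classes of finitely many points. *)
Definition finite_orbit (R : realType) (n : nat) (phi : pt R n) : Prop :=
  exists (m : nat) (f : 'I_m -> pt R n),
    forall psi, braid_reach phi psi -> exists k : 'I_m, eqmodpi psi (f k).

From HB Require Import structures.
From mathcomp Require Import all_boot all_order all_algebra.
From mathcomp Require Import complex.
From mathcomp Require Import reals trigo.
From mathcomp Require Import ring.
Set Implicit Arguments. Unset Strict Implicit. Unset Printing Implicit Defensive.
Import Order.TTheory GRing.Theory Num.Theory.
Local Open Scope ring_scope.
Local Open Scope complex_scope.

(* If the orbit is finite, pigeonhole among the iterates sigma_i^k phi, whose
   (i+1)-th coordinate is phi_(i+1) + k (phi_i - phi_(i+1)), gives
   (k1 - k2) (phi_i - phi_(i+1)) in pi Z with k1 <> k2.  Conversely, if all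
   phi_i - phi_(i+1) lie in (pi/N) Z, then, the generators being integral
   affine maps, every point of the orbit differs from phi coordinatewise by
   elements of (pi/N) Z, and such points fall into at most N^(n+1) classes
   modulo pi Z. *)

(* [eqmodpi phi psi] is convertible to [forall j, int_multiple pi%:C (phi j - psi j)]. *)
Definition int_multiple (F : pzRingType) (c x : F) : Prop :=
  exists z : int, x = c * z%:~R.

Lemma int_multiple0 (F : pzRingType) (c : F) : int_multiple c 0.
Proof. by exists 0; rewrite mulr0. Qed.

Lemma int_multipleB (F : pzRingType) (c x y : F) :
  int_multiple c x -> int_multiple c y -> int_multiple c (x - y).
Proof. by move=> [a ->] [b ->]; exists (a - b); rewrite intrB mulrBr. Qed.

Lemma int_multiple_intrM_ratr (F : numFieldType) (c d : F) (k : int) :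
  k != 0 -> int_multiple c (k%:~R * d) -> exists q : rat, d = c * ratr q.
Proof.
move=> k0 [z ekd]; exists (z%:~R / k%:~R).
have kF0 : k%:~R != 0 :> F by rewrite intr_eq0.
by rewrite fmorph_div /= !ratr_int mulrA -ekd mulrC mulKf.
Qed.

Lemma rat_common_denominator (I : finType) (q : I -> rat) :
  exists2 N : nat, (0 < N)%N & forall i, exists z : int, q i = z%:~R / N%:R.
Proof.
pose N := (\prod_i `|denq (q i)|)%N.
have N0 : (0 < N)%N by apply: prodn_gt0 => i; rewrite absz_gt0 denq_neq0.
exists N => // i.
pose d := `|denq (q i)|%N; pose M := (N %/ d)%N.
have N_eq : N = (M * d)%N by rewrite divnK // /d /N (bigD1 i) //= dvdn_mulr.
have d0 : d%:R != 0 :> rat by rewrite pnatr_eq0 absz_eq0 denq_neq0.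
have M0 : M%:R != 0 :> rat.
  by rewrite pnatr_eq0 -lt0n; move: N0; rewrite N_eq muln_gt0 => /andP[].
exists (numq (q i) * M).
rewrite -{1}[q i]divq_num_den -absz_denq -/d [in RHS]N_eq natrM intrM !pmulrn.
by field; rewrite d0 M0.
Qed.

Section BraidAction.
Variables (R : realType) (n : nat).
Implicit Types (phi psi : pt R n) (i : 'I_n).

Lemma val_inord_left i : (inord i : 'I_n.+1) = i :> nat.
Proof. by rewrite inordK // ltnS ltnW. Qed.

Lemma val_inord_right i : (inord i.+1 : 'I_n.+1) = i.+1 :> nat.
Proof. by rewrite inordK // ltnS. Qed.

Lemma inord_left_of_val i (j : 'I_n.+1) : val j = val i -> j = inord i.
Proof. by move=> ji; apply/val_inj; rewrite /= val_inord_left. Qed.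

Lemma inord_right_of_val i (j : 'I_n.+1) : val j = i.+1 -> j = inord i.+1.
Proof. by move=> ji; apply/val_inj; rewrite /= val_inord_right. Qed.

Lemma sigma_left i psi : sigma i psi (inord i) = 2 * psi (inord i) - psi (inord i.+1).
Proof. by rewrite /sigma /= val_inord_left eqxx. Qed.

Lemma sigma_right i psi : sigma i psi (inord i.+1) = psi (inord i).
Proof. by rewrite /sigma /= val_inord_right eqxx gtn_eqF. Qed.

Lemma iter_sigma i phi k :
  let d := phi (inord i) - phi (inord i.+1) in
  iter k (sigma i) phi (inord i) = phi (inord i) + k%:R * d /\
  iter k (sigma i) phi (inord i.+1) = phi (inord i.+1) + k%:R * d.
Proof.
elim: k => [|k [IHl IHr]] /=; first by split; ring.
by rewrite sigma_left sigma_right IHl IHr; split; ring.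
Qed.

Lemma iter_sigma_right_sub i phi k1 k2 :
  iter k1 (sigma i) phi (inord i.+1) - iter k2 (sigma i) phi (inord i.+1) =
  (k1%:Z - k2%:Z)%:~R * (phi (inord i) - phi (inord i.+1)).
Proof.
have [_ ->] := iter_sigma i phi k1; have [_ ->] := iter_sigma i phi k2.
by rewrite intrB -!pmulrn; ring.
Qed.

Lemma braid_reach_iter_sigma i phi k : braid_reach phi (iter k (sigma i) phi).
Proof. by elim: k => [|k IH] /=; [exact: br_refl | exact: br_sigma]. Qed.

Section SubtractionClosedInvariant.
Variable S : R[i] -> Prop.
Hypotheses (S0 : S 0) (SB : forall x y, S x -> S y -> S (x - y)).

Let SN x : S x -> S (- x).
Proof. by move=> Sx; rewrite -sub0r; apply: SB. Qed.

Let SD x y : S x -> S y -> S (x + y).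
Proof. by move=> Sx Sy; rewrite -[y]opprK; apply/SB/SN. Qed.

Let S_moved a b p q : S (a - p) -> S (b - q) -> S (p - q) ->
  S (2 * a - b - p) /\ S (a - q).
Proof.
move=> Sap Sbq Spq; split; last by rewrite -(subrKA p); apply: SD.
have -> : 2 * a - b - p = (a - p) + (a - p) - (b - q) + (p - q) by ring.
by apply/SD/Spq/SB/Sbq/SD.
Qed.

Lemma braid_reach_sub_closed phi :
  (forall i, S (phi (inord i) - phi (inord i.+1))) ->
  forall psi, braid_reach phi psi -> forall j, S (psi j - phi j).
Proof.
move=> Sphi psi; elim=> [|i ps _ IH|i ps _ IH] j; first by rewrite subrr.
all: have Si := IH (inord i); have Si1 := IH (inord i.+1).
all: have Sd := Sphi i; have Sd' := SN Sd; rewrite opprB in Sd'.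
all: rewrite /sigma /sigma_inv; case: ifP => [/eqP/inord_left_of_val -> | _];
  last case: ifP => [/eqP/inord_right_of_val -> | _]; last exact: IH.
all: by case: (S_moved Si Si1 Sd); case: (S_moved Si1 Si Sd').
Qed.
End SubtractionClosedInvariant.

Lemma finite_orbit_collision phi (h : nat -> pt R n) :
  finite_orbit phi -> (forall k, braid_reach phi (h k)) ->
  exists k1 k2 : nat, k1 != k2 /\ forall j, int_multiple (pi : R)%:C (h k1 j - h k2 j).
Proof.
move=> [m [f orbit_f]] reach_h.
have /fin_all_exists [g hg] : forall k : 'I_m.+1, exists c, eqmodpi (h k) (f c).
  by move=> k; apply: orbit_f.
have /injectivePn [k1 [k2 k12 gk12]] : ~~ injectiveb g.
  by apply/negP => /injectiveP/leq_card; rewrite !card_ord ltnn.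
exists k1, k2; split=> // j.
have := int_multipleB (hg k1 j) (hg k2 j); rewrite gk12.
by rewrite opprB addrA subrK.
Qed.

Lemma finite_classes_of_lattice_coset phi (N : nat) : (0 < N)%N ->
  exists m (f : 'I_m -> pt R n), forall psi,
    (forall j, int_multiple ((pi : R)%:C / N%:R) (psi j - phi j)) ->
    exists k, eqmodpi psi (f k).
Proof.
move=> N0; pose T := {ffun 'I_n.+1 -> 'I_N}.
exists #|T|, (fun k j => phi j + (pi : R)%:C / N%:R * ((enum_val k : T) j)%:R).
move=> psi /fin_all_exists [z psi_z].
have NZ0 : N%:Z != 0 by rewrite eqz_nat -lt0n.
have res_lt j : (`|(z j %% N)%Z| < N)%N.
  by rewrite -ltz_nat gez0_abs ?modz_ge0 // ltz_pmod.
exists (enum_rank [ffun j => Ordinal (res_lt j)]) => j.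
rewrite enum_rankK ffunE /=; exists (z j %/ N)%Z.
have NC0 : N%:R != 0 :> R[i] by rewrite pnatr_eq0 -lt0n.
have -> : `|(z j %% N)%Z|%:R = (z j %% N)%Z%:~R :> R[i].
  by rewrite -[in RHS](gez0_abs (modz_ge0 _ NZ0)) pmulrn.
rewrite -[psi j](subrK (phi j)) psi_z.
rewrite {1}(divz_eq (z j) N) intrD intrM -pmulrn.
by field.
Qed.
End BraidAction.

Theorem mainTheorem2 (R : realType) (n : nat) (hn : (1 <= n)%N) (phi : pt R n) :
  finite_orbit phi <->
  (forall i : 'I_n, exists q : rat,
      phi (inord i) - phi (inord i.+1) = (pi : R)%:C * (ratr q)).
Proof.
split=> [fin i | /fin_all_exists [q phi_q]].
- have [k1 [k2 [k12 cls]]] := finite_orbit_collision fin (braid_reach_iter_sigma i phi).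
  apply: (@int_multiple_intrM_ratr _ _ _ (k1%:Z - k2%:Z)); first by rewrite subr_eq0.
  by rewrite -iter_sigma_right_sub; apply: cls.
- have [N N0 q_N] := rat_common_denominator q.
  have [m [f classes_f]] := finite_classes_of_lattice_coset phi N0.
  exists m, f => psi reach_psi; apply/classes_f/(braid_reach_sub_closed _ _ _ reach_psi).
  + exact: int_multiple0.
  + exact: int_multipleB.
  + move=> i; have [z q_z] := q_N i; exists z.
    by rewrite phi_q q_z fmorph_div /= ratr_int ratr_nat mulrA mulrAC.
Qed.
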